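(* For every integer $k\ge1$: (a) every graph $G$ with $\mathrm{adim}(G)=k$ has clique number at most $2^k$; (b) every graph $G$ with $\mathrm{bdim}(G)=k$ has clique number at most $2^k$; (c) there exists a graph $G$ with $\mathrm{adim}(G)=\mathrm{bdim}(G)=k$ whose clique number is exactly $2^k$.
   Context: $d(x,y)$ is the length of a shortest $x$–$y$ path, with $d(x,y)=\infty$ if $x,y$ lie in different components. For an integer $k\ge1$ let $d_k(x,y)=\min\{d(x,y),k+1\}$. A set $A\subseteq V(G)$ is an adjacency resolving set if for all distinct $x,y\in V(G)$ there is $z\in A$ with $d_1(x,z)\ne d_1(y,z)$. The adjacency dimension $\mathrm{adim}(G)$ is the minimum size of an adjacency resolving set. A function $f:V(G)\to\mathbb{Z}_{\ge 0}$ is a resolving broadcast of $G$ if for all distinct $x,y\in V(G)$ there is $z\in V(G)$ with $f(z)=i>0$ and $d_i(x,z)\ne d_i(y,z)$. The broadcast dimension $\mathrm{bdim}(G)$ is the minimum of $\sum_{v\in V(G)}f(v)$ over all resolving broadcasts $f$ of $G$. *)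

(* Finite simple graphs: a symmetric irreflexive relation e on a finType T. *)
From mathcomp Require Import all_boot.
Set Implicit Arguments. Unset Strict Implicit. Unset Printing Implicit Defensive.

Section Graphs.
Variable T : finType.
Variable e : rel T.

Definition path_of_length (n : nat) (x y : T) : bool :=
  [exists s : n.-tuple T, [&& path e x s, last x s == y & uniq (x :: s)]].

(* d(x,y): length of a shortest x-y path; None encodes infinity
   (a simple path has fewer than #|T| edges, so searching 0..#|T|-1 suffices) *)
Definition dist (x y : T) : option nat :=
  let n := find (fun m => path_of_length m x y) (iota 0 #|T|) in
  if n < #|T| then Some n else None.

Definition dist_trunc (k : nat) (x y : T) : nat :=
  match dist x y with Some n => minn n k.+1 | None => k.+1 end.

Definition adj_resolving (A : {set T}) : Prop :=
  forall x y : T, x != y -> exists2 z, z \in A & dist_trunc 1 x z != dist_trunc 1 y z.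

Definition is_adim (k : nat) : Prop :=
  (exists A : {set T}, adj_resolving A /\ #|A| = k) /\
  (forall A : {set T}, adj_resolving A -> k <= #|A|).

Definition resolving_broadcast (f : T -> nat) : Prop :=
  forall x y : T, x != y ->
    exists z, 0 < f z /\ dist_trunc (f z) x z != dist_trunc (f z) y z.

Definition is_bdim (k : nat) : Prop :=
  (exists f : T -> nat, resolving_broadcast f /\ \sum_(v : T) f v = k) /\
  (forall f : T -> nat, resolving_broadcast f -> k <= \sum_(v : T) f v).

Definition is_clique (K : {set T}) : bool :=
  [forall x in K, forall y in K, (x != y) ==> e x y].

Definition clique_number : nat := \max_(K : {set T} | is_clique K) #|K|.

End Graphs.

From mathcomp Require Import all_boot zify.
Set Implicit Arguments. Unset Strict Implicit. Unset Printing Implicit Defensive.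

(* Truncated distances are 1-Lipschitz along edges, so inside a
   clique K the values d_i(x, z), x in K, lie pairwise within 1 of each other;
   three such values cannot be pairwise distinct.  Fix x0 in K and send x in K
   to its signature: the set of broadcasting vertices z (f z > 0) at which
   d_(f z)(x, z) differs from d_(f z)(x0, z).  If f resolves the graph, two
   distinct vertices of K are separated by some z, and by the three-values
   remark exactly one of them disagrees with x0 at z; so the signature is
   injective on K and |K| <= 2^|supp f| <= 2^(sum f).  An adjacency resolving
   set A is the broadcast 1_A of weight |A|, which gives (a) and (b).

   On the vertex set 'I_k + {set 'I_k}, join i to every subset
   containing it and make the subsets a clique of size 2^k.  The k atoms
   resolve the graph by adjacency, so the bound gives clique number exactly
   2^k, and then the same bound forces every resolving broadcast (hence every
   adjacency resolving set) to have weight at least k. *)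

Section Distances.
Variables (T : finType) (e : rel T).

Lemma dist_Some_path x y n :
  dist e x y = Some n -> path_of_length e n x y /\ n < #|T|.
Proof.
rewrite /dist; case: ifP => // n_lt [<-]; split => //.
have has_path : has (fun m => path_of_length e m x y) (iota 0 #|T|).
  by rewrite has_find size_iota.
by have := nth_find 0 has_path; rewrite nth_iota.
Qed.

Lemma path_dist_le x y m :
  path_of_length e m x y -> exists2 d, dist e x y = Some d & d <= m.
Proof.
move=> pxy; have m_lt : m < #|T|.
  move/existsP: pxy => [s /and3P[_ _ /card_uniqP s_uniq]].
  by have := max_card (mem (x :: s)); rewrite s_uniq /= size_tuple.
have find_le : find (fun m => path_of_length e m x y) (iota 0 #|T|) <= m.
  by rewrite leqNgt; apply/negP => /(before_find 0); rewrite nth_iota // pxy.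
exists (find (fun m => path_of_length e m x y) (iota 0 #|T|)) => //.
by rewrite /dist ifT //; apply: leq_ltn_trans find_le m_lt.
Qed.

Lemma path_of_length_cons x y z n : e x y -> path_of_length e n y z ->
  exists2 m, m <= n.+1 & path_of_length e m x z.
Proof.
move=> exy /existsP[s /and3P[ps last_s _]].
have pxs : path e x (y :: s) by rewrite /= exy ps.
have last_xs : last x (y :: s) == z by [].
move: pxs last_xs => /shortenP[p pp p_uniq p_sub] last_p.
exists (size p); last by apply/existsP; exists (in_tuple p); rewrite pp last_p p_uniq.
move: p_uniq; rewrite cons_uniq => /andP[_ p_uniq].
by rewrite (leq_trans (uniq_leq_size p_uniq p_sub)) //= size_tuple.
Qed.

Lemma dist_trunc_edge i x y z : e x y -> dist_trunc e i x z <= (dist_trunc e i y z).+1.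
Proof.
move=> exy; rewrite /dist_trunc.
case dyz: (dist e y z) => [n|]; last by case: (dist e x z) => [d|] /=; lia.
have [/(path_of_length_cons exy) [m m_le /path_dist_le [d -> d_le]] _] :=
  dist_Some_path dyz.
lia.
Qed.

Lemma dist_trunc1 x z :
  dist_trunc e 1 x z = if x == z then 0 else if e x z then 1 else 2.
Proof.
have path0 : path_of_length e 0 x z -> x = z.
  by move=> /existsP[[[|? ?] ?] /and3P[_ /eqP]].
have path1 : path_of_length e 1 x z -> e x z.
  move=> /existsP[[[|w [|? ?]] ?] /and3P[]] //=.
  by rewrite andbT => exw /eqP <-.
rewrite /dist_trunc; case: (eqVneq x z) => [<-|x_neq_z].
  have : path_of_length e 0 x x by apply/existsP; exists [tuple]; rewrite /= eqxx.
  by case/path_dist_le => d -> ; case: d.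
case exz: (e x z).
  have : path_of_length e 1 x z.
    by apply/existsP; exists [tuple z]; rewrite /= exz eqxx inE x_neq_z.
  case/path_dist_le => [[|[|d]] dxz] // _; rewrite dxz //.
  by have [/path0 x_eq_z _] := dist_Some_path dxz; rewrite x_eq_z eqxx in x_neq_z.
case dxz: (dist e x z) => [[|[|d]]|] //; have [pxz _] := dist_Some_path dxz.
- by rewrite (path0 pxz) eqxx in x_neq_z.
- by rewrite (path1 pxz) in exz.
Qed.

End Distances.

Lemma close_values_neq a b c :
  a <= b.+1 -> b <= a.+1 -> a <= c.+1 -> c <= a.+1 -> b <= c.+1 -> c <= b.+1 ->
  a != b -> (a != c) != (b != c).
Proof. by case: (eqVneq a c); case: (eqVneq b c); case: (eqVneq a b); lia. Qed.

Lemma card_support_le_sum (T : finType) (f : T -> nat) :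
  #|[set z | 0 < f z]| <= \sum_v f v.
Proof.
rewrite (bigID (mem [set z | 0 < f z])) /= -[#|_|]addn0 leq_add //.
by rewrite -sum1_card; apply: leq_sum => v; rewrite inE.
Qed.

Section CliqueBound.
Variables (T : finType) (e : rel T).

Lemma dist_trunc_clique (K : {set T}) i x y z : is_clique e K ->
  x \in K -> y \in K -> dist_trunc e i x z <= (dist_trunc e i y z).+1.
Proof.
move=> /forallP K_clique xK yK; case: (eqVneq x y) => [->|x_neq_y]//.
apply: dist_trunc_edge; move: (K_clique x); rewrite xK => /forallP /(_ y).
by rewrite yK x_neq_y.
Qed.

Lemma clique_card_le (f : T -> nat) (K : {set T}) :
  resolving_broadcast e f -> is_clique e K -> #|K| <= 2 ^ (\sum_v f v).
Proof.
move=> f_res K_clique; case: (set_0Vmem K) => [->|[x0 x0K]]; first by rewrite cards0.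
pose D z x := dist_trunc e (f z) x z.
pose signature x := [set z | (0 < f z) && (D z x != D z x0)].
have signature_inj : {in K &, injective signature}.
  move=> x y xK yK sig_eq; apply/eqP; apply/negPn/negP => x_neq_y.
  have [z [fz_pos Dxy]] := f_res x y x_neq_y.
  have sig_z := congr1 (fun A : {set T} => z \in A) sig_eq.
  rewrite !inE fz_pos /= in sig_z.
  have close u v : u \in K -> v \in K -> D z u <= (D z v).+1.
    by move=> uK vK; apply: dist_trunc_clique K_clique uK vK.
  have := close_values_neq (close x y xK yK) (close y x yK xK) (close x x0 xK x0K)
    (close x0 x x0K xK) (close y x0 yK x0K) (close x0 y x0K yK) Dxy.
  by rewrite sig_z eqxx.
rewrite -(card_in_imset signature_inj).
have sig_sub : signature @: K \subset powerset [set z | 0 < f z].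
  apply/subsetP => _ /imsetP[x _ ->]; rewrite inE; apply/subsetP => z.
  by rewrite !inE => /andP[].
apply: leq_trans (subset_leq_card sig_sub) _.
by rewrite card_powerset leq_pexp2l // card_support_le_sum.
Qed.

Lemma clique_number_le (f : T -> nat) :
  resolving_broadcast e f -> clique_number e <= 2 ^ (\sum_v f v).
Proof. by move=> f_res; apply/bigmax_leqP => K; apply: clique_card_le. Qed.

Lemma clique_number_ge (K : {set T}) : is_clique e K -> #|K| <= clique_number e.
Proof. exact: (@leq_bigmax_cond _ (is_clique e) (fun K : {set T} => #|K|)). Qed.

Lemma broadcast_weight_ge k (f : T -> nat) :
  clique_number e = 2 ^ k -> resolving_broadcast e f -> k <= \sum_v f v.
Proof. by move=> omega_eq /clique_number_le; rewrite omega_eq leq_exp2l. Qed.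

Lemma indicator_broadcast (A : {set T}) : adj_resolving e A ->
  resolving_broadcast e (fun v => nat_of_bool (v \in A)) /\
  \sum_v nat_of_bool (v \in A) = #|A|.
Proof.
move=> A_res; split.
  by move=> x y x_neq_y; have [z zA Dxy] := A_res x y x_neq_y; exists z; rewrite zA.
rewrite (bigID (mem A)) /= -[#|A|]addn0 -sum1_card; congr (_ + _).
  by apply: eq_bigr => v /= ->.
by apply: big1 => v /negbTE /= ->.
Qed.

End CliqueBound.

Section Extremal.
Variable k : nat.

Definition extremal_vertex : finType := ('I_k + {set 'I_k})%type.

Definition extremal_edge (u v : extremal_vertex) : bool :=
  match u, v with
  | inl _, inl _ => false
  | inl i, inr Q | inr Q, inl i => i \in Q
  | inr Q1, inr Q2 => Q1 != Q2
  end.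

Lemma extremal_edge_sym : symmetric extremal_edge.
Proof. by move=> [i|Q1] [j|Q2] //=; rewrite eq_sym. Qed.

Lemma extremal_edge_irr : irreflexive extremal_edge.
Proof. by move=> [i|Q] //=; rewrite eqxx. Qed.

Definition atoms : {set extremal_vertex} := [set inl i | i : 'I_k].

Definition subsets : {set extremal_vertex} := inr @: powerset [set: 'I_k].

Lemma card_atoms : #|atoms| = k.
Proof. by rewrite card_imset ?card_ord // => i j [->]. Qed.

Lemma card_subsets : #|subsets| = 2 ^ k.
Proof. by rewrite card_imset ?card_powerset ?cardsT ?card_ord // => Q1 Q2 [->]. Qed.

Lemma subsets_clique : is_clique extremal_edge subsets.
Proof.
apply/forallP => u; apply/implyP => /imsetP[Q1 _ ->].
by apply/forallP => v; apply/implyP => /imsetP[Q2 _ ->]; apply/implyP.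
Qed.

(* The atoms resolve the graph: an atom is told apart from everything by
   itself, and two subsets by an atom in their symmetric difference. *)
Lemma atoms_resolving : adj_resolving extremal_edge atoms.
Proof.
have atomP i : (inl i : extremal_vertex) \in atoms by apply/imsetP; exists i.
move=> [i|Q1] y y_neq.
  exists (inl i) => //; rewrite !dist_trunc1 eqxx (eq_sym y) (negbTE y_neq).
  by case: ifP.
case: y y_neq => [j|Q2] Q_neq.
  by exists (inl j) => //; rewrite !dist_trunc1 eqxx; case: ifP.
have [i Q_diff] : exists i, (i \in Q1) != (i \in Q2).
  apply/existsP; apply: contraR Q_neq => /existsPn Q_same.
  by apply/eqP; congr inr; apply/setP => i; have /negPn/eqP := Q_same i.
by exists (inl i) => //; rewrite !dist_trunc1 /=; move: Q_diff; do 2!case: (_ \in _).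
Qed.

Lemma extremal_clique_number : clique_number extremal_edge = 2 ^ k.
Proof.
have [atoms_broadcast atoms_weight] := indicator_broadcast atoms_resolving.
apply/eqP; rewrite eqn_leq; apply/andP; split.
  by have := clique_number_le atoms_broadcast; rewrite atoms_weight card_atoms.
by rewrite -card_subsets clique_number_ge // subsets_clique.
Qed.

End Extremal.

Theorem corollary3p7 (k : nat) : 1 <= k ->
  (forall (T : finType) (e : rel T), symmetric e -> irreflexive e ->
     is_adim e k -> clique_number e <= 2 ^ k) /\
  (forall (T : finType) (e : rel T), symmetric e -> irreflexive e ->
     is_bdim e k -> clique_number e <= 2 ^ k) /\
  (exists (T : finType) (e : rel T), [/\ symmetric e, irreflexive e,
     is_adim e k, is_bdim e k & clique_number e = 2 ^ k]).
Proof.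
move=> _; split; [|split].
- move=> T e _ _ [[A [A_res <-]] _].
  have [A_broadcast <-] := indicator_broadcast A_res.
  exact: clique_number_le A_broadcast.
- by move=> T e _ _ [[f [f_res <-]] _]; apply: clique_number_le.
have [atoms_broadcast atoms_weight] := indicator_broadcast (@atoms_resolving k).
have omega := @extremal_clique_number k.
exists (extremal_vertex k), (@extremal_edge k); split.
- exact: extremal_edge_sym.
- exact: extremal_edge_irr.
- split; first by exists (atoms k); rewrite card_atoms; split; first exact: atoms_resolving.
  move=> A /indicator_broadcast[A_broadcast <-].
  exact: broadcast_weight_ge omega A_broadcast.
- split; first by exists (fun v => nat_of_bool (v \in atoms k)); rewrite atoms_weight card_atoms.
  by move=> f f_res; apply: broadcast_weight_ge omega f_res.
- exact: omega.
Qed.
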